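(* For any $\xi>0$ and $\epsilon>0$, there exists an $\epsilon$-differentially private (central model) $\left(1+\xi,\ O_\xi\!\left(\frac{m^4}{\epsilon n}\right)\right)$-approximation algorithm for the rank aggregation problem, i.e., one whose additive error is at most $C_\xi \frac{m^4}{\epsilon n}$ for a constant $C_\xi$ depending only on $\xi$.
   Context: Items are $[m]=\{1,\dots,m\}$; $\mathbb{S}_m$ is the set of rankings (permutations) of $[m]$, $\pi(j)$ being the position of item $j$. The Kendall tau distance is $K(\pi_1,\pi_2)=|\{(i,j):\pi_1(i)<\pi_1(j),\ \pi_2(i)>\pi_2(j)\}|$. An input is a list $\Pi=\{\pi_1,\dots,\pi_n\}$ of $n$ rankings. Define $\bar K(\sigma,\Pi)=\frac1n\sum_k K(\sigma,\pi_k)$ and $\mathrm{OPT}(\Pi)=\min_\sigma\bar K(\sigma,\Pi)$. A randomized algorithm is an $(\alpha,\beta)$-approximation algorithm for rank aggregation if for every input $\Pi$ its output $\sigma$ satisfies $\mathbb{E}[\bar K(\sigma,\Pi)]\le\alpha\,\mathrm{OPT}(\Pi)+\beta$. Two inputs are neighboring if they differ in a single ranking; an algorithm $\mathcal{M}$ is $\epsilon$-DP (central model) if for all neighboring $\Pi,\Pi'$ and all output sets $S$, $\Pr[\mathcal{M}(\Pi)\in S]\le e^{\epsilon}\Pr[\mathcal{M}(\Pi')\in S]$. *)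

From HB Require Import structures.
From mathcomp Require Import all_boot all_order all_algebra perm.
From mathcomp Require Import reals.
From mathcomp Require Import sequences exp.
Set Implicit Arguments. Unset Strict Implicit. Unset Printing Implicit Defensive.
Import Order.TTheory GRing.Theory Num.Theory.
Local Open Scope ring_scope.

(* A ranking of the items 'I_m is a permutation; (pi j) is the position of item j. *)
Notation ranking m := {perm 'I_m}.

Definition kendall (m : nat) (p1 p2 : ranking m) : nat :=
  #|[set ij : 'I_m * 'I_m | (p1 ij.1 < p1 ij.2)%N && (p2 ij.2 < p2 ij.1)%N]|.

Definition avgK (R : realType) (m n : nat) (s : ranking m) (Pi : n.-tuple (ranking m)) : R :=
  (\sum_(k < n) (kendall s (tnth Pi k))%:R) / n%:R.

Definition OPT (R : realType) (m n : nat) (Pi : n.-tuple (ranking m)) : R :=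
  \big[Num.min/avgK R 1 Pi]_(s : ranking m) avgK R s Pi.

Definition is_dist (R : realType) (m : nat) (P : {ffun ranking m -> R}) : Prop :=
  (forall s, 0 <= P s) /\ \sum_s P s = 1.

(* A randomized algorithm on inputs of n rankings over m items: maps an input to
   the distribution of its output. *)
Definition rand_alg (R : realType) (m n : nat) :=
  n.-tuple (ranking m) -> {ffun ranking m -> R}.

Definition prob (R : realType) (m : nat) (P : {ffun ranking m -> R}) (S : {set ranking m}) : R :=
  \sum_(s in S) P s.

Definition expected_avgK (R : realType) (m n : nat) (P : {ffun ranking m -> R})
  (Pi : n.-tuple (ranking m)) : R :=
  \sum_s P s * avgK R s Pi.

Definition neighboring (m n : nat) (Pi Pi' : n.-tuple (ranking m)) : Prop :=
  exists i : 'I_n, forall j : 'I_n, j != i -> tnth Pi j = tnth Pi' j.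

Definition is_DP (R : realType) (eps : R) (m n : nat) (M : rand_alg R m n) : Prop :=
  forall Pi Pi', neighboring Pi Pi' ->
    forall S : {set ranking m}, prob (M Pi) S <= expR eps * prob (M Pi') S.

Definition is_approx (R : realType) (alpha beta : R) (m n : nat) (M : rand_alg R m n) : Prop :=
  forall Pi, expected_avgK (M Pi) Pi <= alpha * OPT R Pi + beta.

(* The mechanism is the exponential mechanism with score the average Kendall
   distance: it outputs sigma with probability proportional to
   exp (- beta * avgK sigma Pi), where beta = eps n / (2 m^2).  Replacing one
   input ranking moves every avgK sigma Pi by at most m^2 / n, so every weight
   and the normalising sum move by a factor at most exp (eps / 2): this gives
   eps-differential privacy.  For the utility, a ranking whose excess cost over
   OPT is y contributes at most y exp (- beta y) <= 2 exp (- beta y / 2) / beta,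
   which is negligible once beta y >= 2 m^2 >= 2 log m!; hence the expected cost
   is at most OPT + (2 m^2 + 2) / beta <= OPT + 8 m^4 / (eps n), already with
   multiplicative factor 1. *)

From HB Require Import structures.
From mathcomp Require Import all_boot all_order all_algebra perm.
From mathcomp Require Import reals.
From mathcomp Require Import sequences exp.
From mathcomp Require Import ring lra.
Set Implicit Arguments.
Unset Strict Implicit.
Unset Printing Implicit Defensive.

Import Order.TTheory GRing.Theory Num.Theory.
Local Open Scope ring_scope.

Lemma mul_expRN_le (R : realType) (K y : R) : 0 <= K -> K <= y ->
  y * expR (- y) <= 2 * expR (- (K / 2)).
Proof.
move=> K_ge0 Ky.
have expR_half : expR (- y) = expR (- (y / 2)) * expR (- (y / 2)).
  by rewrite -expRD; congr expR; lra.
have half_le_expR : y / 2 <= expR (y / 2).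
  by apply: le_trans (expR_ge1Dx _); lra.
have expR_halfK : expR (y / 2) * expR (- (y / 2)) = 1 by rewrite -expRD subrr expR0.
have expR_half_le : expR (- (y / 2)) <= expR (- (K / 2)) by rewrite ler_expR; lra.
have := expR_gt0 (- (y / 2)).
rewrite expR_half mulrA => e_gt0; apply: ler_pM; [|exact: ltW|nra|by []].
by apply: mulr_ge0; lra.
Qed.

Section Gibbs.
Variables (R : realType) (T : finType).
Implicit Types (b c d K : R) (u : T -> R).

Definition gibbs b u : {ffun T -> R} :=
  [ffun s => expR (- (b * u s)) / \sum_t expR (- (b * u t))].

Lemma gibbs_normalizer_gt0 (s0 : T) b u : 0 < \sum_t expR (- (b * u t)).
Proof.
rewrite (bigD1 s0) //= ltr_pwDl ?expR_gt0 // sumr_ge0 // => t _.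
exact: ltW (expR_gt0 _).
Qed.

Lemma gibbs_ge0 b u s : 0 <= gibbs b u s.
Proof.
by rewrite ffunE divr_ge0 // ?sumr_ge0 // => [|t _]; exact: ltW (expR_gt0 _).
Qed.

Lemma gibbs_sum1 (s0 : T) b u : \sum_s gibbs b u s = 1.
Proof.
under eq_bigr do rewrite ffunE.
by rewrite -mulr_suml divff // gt_eqF // (gibbs_normalizer_gt0 s0).
Qed.

Lemma gibbs_shift b u u' c : (forall s, u' s = u s + c) -> gibbs b u' = gibbs b u.
Proof.
move=> u'E.
have expR_split s : expR (- (b * u' s)) = expR (- (b * u s)) * expR (- (b * c)).
  by rewrite u'E -expRD mulrDr opprD.
apply/ffunP => s; rewrite !ffunE expR_split (eq_bigr _ (fun t _ => expR_split t)).
by rewrite -mulr_suml invfM mulrACA divff ?mulr1 // gt_eqF // expR_gt0.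
Qed.

Lemma gibbs_ratio_le b u u' d : 0 <= b -> (forall s, `|u s - u' s| <= d) ->
  forall s, gibbs b u s <= expR (2 * (b * d)) * gibbs b u' s.
Proof.
move=> b_ge0 dist_le.
have weight_le v v' : `|v - v'| <= d ->
    expR (- (b * v)) <= expR (b * d) * expR (- (b * v')).
  rewrite ler_norml => /andP[le_d _]; rewrite -expRD ler_expR.
  have : v' - v <= d by lra.
  move=> /(ler_wpM2l b_ge0); rewrite mulrBr; lra.
set E := expR (b * d); have E_ge0 : 0 <= E by exact: ltW (expR_gt0 _).
move=> s; rewrite !ffunE.
have Z_gt0 := gibbs_normalizer_gt0 s b u; have Z'_gt0 := gibbs_normalizer_gt0 s b u'.
set Z := \sum_t _ in Z_gt0 *; set Z' := \sum_t _ in Z'_gt0 *.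
have Z'_le : Z' <= E * Z.
  by rewrite mulr_sumr; apply: ler_sum => t _; apply: weight_le; rewrite distrC.
have -> : expR (2 * (b * d)) = E * E by rewrite -expRD; congr expR; lra.
set w' := expR (- (b * u' s)); set q := w' / Z'.
have q_ge0 : 0 <= q by rewrite divr_ge0 // ?ltW // expR_gt0.
rewrite ler_pdivrMr //; apply: le_trans (weight_le _ _ (dist_le s)) _.
have w'_eq : w' = q * Z' by rewrite /q divfK // lt0r_neq0.
clearbody q; rewrite -/E -/w' w'_eq -!mulrA ler_pM2l ?expR_gt0 // mulrCA.
exact: ler_wpM2l.
Qed.

Lemma gibbs_mean_le_nonneg b K u (s0 : T) :
  0 < b -> 0 <= K -> (forall s, 0 <= u s) -> u s0 = 0 ->
  \sum_s gibbs b u s * u s <= (K + 2 * #|T|%:R * expR (- (K / 2))) / b.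
Proof.
move=> b_gt0 K_ge0 u_ge0 us0.
set Z := \sum_t expR (- (b * u t)).
have Z_ge1 : 1 <= Z.
  rewrite /Z (bigD1 s0) //= us0 mulr0 oppr0 expR0 lerDl sumr_ge0 // => t _.
  exact: ltW (expR_gt0 _).
have term_le s : gibbs b u s * u s <= K / b * gibbs b u s + 2 / b * expR (- (K / 2)).
  have gibbs_ge0' := gibbs_ge0 b u s; have e_ge0 := ltW (expR_gt0 (- (K / 2))).
  have [bu_le | K_lt] := leP (b * u s) K.
  - rewrite mulrC -[leLHS]addr0; apply: lerD; last by rewrite mulr_ge0 // divr_ge0 // ltW.
    by apply: ler_wpM2r => //; rewrite ler_pdivlMr // mulrC.
  - have gibbs_le : gibbs b u s <= expR (- (b * u s)).
      rewrite ffunE -/Z ler_pdivrMr; last exact: lt_le_trans ltr01 Z_ge1.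
      by rewrite ler_peMr // ltW // expR_gt0.
    rewrite -[leLHS]add0r; apply: lerD; first by rewrite mulr_ge0 // divr_ge0 // ltW.
    apply: le_trans (ler_wpM2r (u_ge0 s) gibbs_le) _.
    rewrite mulrAC ler_pdivlMr // mulrC mulrA mulrAC.
    exact: mul_expRN_le (ltW K_lt).
apply: le_trans (ler_sum _ (fun s _ => term_le s)) _.
rewrite big_split /= -mulr_sumr (gibbs_sum1 s0) mulr1 sumr_const [leRHS]mulrDl lerD2l.
by rewrite -[_ *+ _]mulr_natl; lra.
Qed.

Lemma gibbs_mean_le b K c u (s0 : T) :
  0 < b -> 0 <= K -> (forall s, c <= u s) -> u s0 = c ->
  \sum_s gibbs b u s * u s <= c + (K + 2 * #|T|%:R * expR (- (K / 2))) / b.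
Proof.
move=> b_gt0 K_ge0 c_le us0; set v := fun s => u s - c.
have -> : gibbs b u = gibbs b v by apply: (@gibbs_shift b v u c) => s; rewrite subrK.
have -> : \sum_s gibbs b v s * u s = \sum_s gibbs b v s * v s + c.
  rewrite -[c in RHS]mul1r -(gibbs_sum1 s0 b v) mulr_suml -big_split /=.
  by apply: eq_bigr => s _; rewrite -mulrDr subrK.
rewrite addrC lerD2l; apply: (gibbs_mean_le_nonneg (s0 := s0)) => // [s|].
  by rewrite /v subr_ge0.
by rewrite /v us0 subrr.
Qed.

End Gibbs.

Lemma fact_leq_expn m : (m`! <= m ^ m)%N.
Proof.
elim: m => // m IHm; rewrite factS expnS leq_mul //.
by apply: leq_trans IHm _; case: m => // m; rewrite leq_exp2r.
Qed.

Lemma card_ranking_le (R : realType) m : (#|ranking m|%:R : R) <= expR (m * m)%:R.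
Proof.
rewrite card_Sn; apply: (@le_trans _ _ ((m ^ m)%N%:R)).
  by rewrite ler_nat fact_leq_expn.
rewrite natrX natrM expRM_natl lerXn2r ?nnegrE ?ler0n ?(ltW (expR_gt0 _)) //.
by apply: le_trans (expR_ge1Dx _); rewrite lerDr.
Qed.

Lemma kendall_le m (p1 p2 : ranking m) : (kendall p1 p2 <= m * m)%N.
Proof. by rewrite /kendall; apply: leq_trans (max_card _) _; rewrite card_prod card_ord. Qed.

Section AverageKendall.
Variables (R : realType) (m n : nat).
Implicit Types (s : ranking m) (Pi : n.-tuple (ranking m)).

Lemma avgK_ge0 s Pi : 0 <= avgK R s Pi.
Proof. by rewrite /avgK divr_ge0 // sumr_ge0. Qed.

Lemma OPT_le s Pi : OPT R Pi <= avgK R s Pi.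
Proof. exact: bigmin_le. Qed.

Lemma OPT_attained Pi : exists s, OPT R Pi = avgK R s Pi.
Proof.
apply: (big_ind (fun v => exists s, v = avgK R s Pi)) => [|_ _ [s ->] [t ->]|s _].
- by exists 1%g.
- by rewrite /Num.min; case: ltP => _; [exists s | exists t].
- by exists s.
Qed.

Lemma OPT_ge0 Pi : 0 <= OPT R Pi.
Proof. by have [s ->] := OPT_attained Pi; exact: avgK_ge0. Qed.

Lemma avgK_neighboring s Pi Pi' : neighboring Pi Pi' ->
  `|avgK R s Pi - avgK R s Pi'| <= (m * m)%:R / n%:R.
Proof.
move=> [i same_off_i]; rewrite /avgK -mulrBl normrM normfV normr_nat.
apply: ler_wpM2r; first by rewrite invr_ge0.
rewrite -sumrB (bigD1 i) //= big1 ?addr0 => [|j /same_off_i ->].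
  have := kendall_le s (tnth Pi i); have := kendall_le s (tnth Pi' i).
  have := ler0n R (kendall s (tnth Pi i)); have := ler0n R (kendall s (tnth Pi' i)).
  rewrite -!(ler_nat R) ler_norml => *; apply/andP; split; lra.
by rewrite subrr.
Qed.

End AverageKendall.

Lemma is_approxW (R : realType) m n (M : rand_alg R m n) (alpha alpha' beta : R) :
  alpha <= alpha' -> is_approx alpha beta M -> is_approx alpha' beta M.
Proof.
move=> le_alpha approx Pi; apply: le_trans (approx Pi) _.
by rewrite lerD2r; apply: ler_wpM2r => //; exact: OPT_ge0.
Qed.

Section ExponentialMechanism.
Variables (R : realType) (eps : R) (m n : nat).
Hypothesis eps_gt0 : 0 < eps.

(* eps / (2 Delta), where Delta = m^2 / n is the sensitivity of avgK. *)
Definition rank_beta : R := eps * n%:R / (2 * (m * m)%:R).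

Definition exp_mech : rand_alg R m n :=
  fun Pi => gibbs rank_beta (fun s => avgK R s Pi).

Lemma exp_mech_dist Pi : is_dist (exp_mech Pi).
Proof. by split=> [s|]; [exact: gibbs_ge0 | exact: (gibbs_sum1 (1%g : ranking m))]. Qed.

Lemma rank_beta_sensitivity : 2 * (rank_beta * ((m * m)%:R / n%:R)) <= eps.
Proof.
rewrite /rank_beta; have [->|m_gt0] := posnP m; first by rewrite !mul0r !mulr0 ltW.
have [->|n_gt0] := posnP n; first by rewrite invr0 !mulr0 ltW.
rewrite le_eqVlt; apply/orP; left; apply/eqP; field.
by rewrite !pnatr_eq0 -!lt0n n_gt0 m_gt0.
Qed.

Lemma exp_mech_DP : is_DP eps exp_mech.
Proof.
move=> Pi Pi' nb S; rewrite /prob mulr_sumr; apply: ler_sum => s _.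
have beta_ge0 : 0 <= rank_beta by rewrite divr_ge0 // mulr_ge0 // ltW.
apply: le_trans (gibbs_ratio_le beta_ge0 (fun t => avgK_neighboring R t nb) s) _.
apply: ler_wpM2r; first exact: gibbs_ge0.
by rewrite ler_expR rank_beta_sensitivity.
Qed.

Lemma exp_mech_approx : (0 < n)%N ->
  is_approx 1 (8 * (m%:R ^+ 4 / (eps * n%:R))) exp_mech.
Proof.
move=> n_gt0 Pi; rewrite mul1r; have [s0 OPT_s0] := OPT_attained R Pi.
have [m0 | m_gt0] := posnP m.
  have avgK0 s : avgK R s Pi = 0.
    rewrite /avgK big1 ?mul0r // => k _.
    by have := kendall_le s (tnth Pi k); rewrite [in (m * m)%N]m0 leqn0 => /eqP ->.
  rewrite /expected_avgK big1 => [|s _]; last by rewrite avgK0 mulr0.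
  by rewrite OPT_s0 avgK0 m0 expr0n mul0r mulr0 addr0.
set M : R := (m * m)%:R; have M_ge1 : 1 <= M by rewrite ler1n muln_gt0 m_gt0.
have beta_gt0 : 0 < rank_beta.
  by rewrite divr_gt0 ?mulr_gt0 ?ltr0n // muln_gt0 m_gt0.
have K_ge0 : 0 <= 2 * M by lra.
have := gibbs_mean_le (u := fun s => avgK R s Pi) beta_gt0 K_ge0
  (fun s => OPT_le R s Pi) (esym OPT_s0).
move=> /le_trans; apply; rewrite lerD2l.
have card_term : 2 * #|ranking m|%:R * expR (- (2 * M / 2)) <= 2.
  have -> : 2 * M / 2 = M by lra.
  rewrite -mulrA ler_piMr // expRN ler_pdivrMr ?expR_gt0 // mul1r.
  exact: card_ranking_le.
apply: (@le_trans _ _ ((2 * M + 2) / rank_beta)).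
  by rewrite ler_pM2r ?invr_gt0 // lerD2l.
have -> : (2 * M + 2) / rank_beta = (2 * M + 2) * (2 * M) / (eps * n%:R).
  rewrite /rank_beta -/M; field.
  by rewrite !pnatr_eq0 -!lt0n n_gt0 m_gt0 gt_eqF.
rewrite (_ : m%:R ^+ 4 = M ^+ 2); last by rewrite /M natrM -expr2 -exprM.
rewrite [leRHS]mulrA ler_pM2r ?invr_gt0 ?mulr_gt0 ?ltr0n //; nra.
Qed.

End ExponentialMechanism.

Theorem corollary1 (R : realType) (xi : R) (hxi : 0 < xi) :
  exists C : R, 0 < C /\
    forall eps : R, 0 < eps ->
      exists M : forall m n : nat, rand_alg R m n,
        forall m n : nat, (0 < n)%N ->
          (forall Pi, is_dist (M m n Pi)) /\
          is_DP eps (M m n) /\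
          is_approx (1 + xi) (C * (m%:R ^+ 4 / (eps * n%:R))) (M m n).
Proof.
exists 8; split=> // eps eps_gt0; exists (exp_mech eps) => m n n_gt0.
split; first exact: exp_mech_dist.
split; first exact: exp_mech_DP.
apply: is_approxW (exp_mech_approx eps_gt0 n_gt0); lra.
Qed.
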